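(* Let $(\Delta,R)$ be a gentle quiver. Then \[ \sum_{\mathcal O\in\mathcal N/\mathbb Z\,\cup\,\mathcal C/\mathbb Z} p(\mathcal O) = 2|\Delta_0|-|\Delta_1| \qquad\text{and}\qquad \sum_{\mathcal O\in\mathcal N/\mathbb Z\,\cup\,\mathcal C/\mathbb Z} q(\mathcal O) = |\Delta_1|. \]
   Context: A quiver $\Delta$ has finite vertex set $\Delta_0$, arrow set $\Delta_1$, maps $s,t$. A path of length $n\ge1$ is $(\alpha_1,\dots,\alpha_n)$ with $s\alpha_i=t\alpha_{i+1}$. A gentle quiver is $(\Delta,R)$ with $\Delta$ connected, $R$ a set of paths of length 2, such that: (1) each vertex is start of at most two arrows and end of at most two arrows; (2) for each arrow $\alpha$ at most one $\beta$ with $s\beta=t\alpha$, $(\beta,\alpha)\notin R$ and at most one $\gamma$ with $t\gamma=s\alpha$, $(\alpha,\gamma)\notin R$; (3) for each $\alpha$ at most one $\beta$ with $(\beta,\alpha)\in R$ and at most one $\gamma$ with $(\alpha,\gamma)\in R$; (4) for some $n$ every path of length $n$ has a subpath in $R$. Fix $\sigma,\tau:\Delta_1\to\{\pm1\}$ with distinct arrows of same start having opposite $\sigma$, distinct arrows of same end opposite $\tau$, and for $s\alpha=t\beta$: $(\alpha,\beta)\in R$ iff $\sigma\alpha=\tau\beta$; $\sigma\omega=\sigma\alpha_n,\tau\omega=\tau\alpha_1$. Permitted paths: paths with no consecutive pair in $R$, plus trivial $1_{x,\varepsilon}$ ($s=t=x$, $\sigma=\varepsilon,\tau=-\varepsilon$);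 maximal if no arrow $\alpha$ with $s\alpha=t\omega,\sigma\alpha=-\tau\omega$ and no $\beta$ with $t\beta=s\omega,\tau\beta=-\sigma\omega$; set $\mathcal M$. Antipaths: all consecutive pairs in $R$, plus trivial $1'_{x,\varepsilon}$ ($s=t=x$, $\sigma=\tau=\varepsilon$); maximal if no $\alpha$ with $s\alpha=t\omega,\sigma\alpha=\tau\omega$ and no $\beta$ with $t\beta=s\omega,\tau\beta=\sigma\omega$; set $\mathcal N$. $\phi:\mathcal M\to\mathcal N$, $\omega\mapsto$ unique $\omega'$ with $t\omega'=t\omega,\tau\omega'=-\tau\omega$; $\psi:\mathcal N\to\mathcal M$, $\omega\mapsto$ unique $\omega'$ with $s\omega'=s\omega,\sigma\omega'=-\sigma\omega$; $\Phi=\phi\psi$ acts on $\mathcal N$ and $\mathcal N/\mathbb Z$ is its set of orbits; for $\mathcal O\in\mathcal N/\mathbb Z$, $p(\mathcal O)=|\mathcal O|$ and $q(\mathcal O)=\sum_{\omega\in\mathcal O}\ell(\omega)$. $\mathcal C$: arrows $\alpha$ with $(\alpha)$ not a subpath of a maximal antipath; $\Psi:\mathcal C\to\mathcal C$, $\alpha\mapsto$ unique $\beta\in\mathcal C$ with $t\beta=s\alpha,\tau\beta=\sigma\alpha$; $\mathcal C/\mathbb Z$ its orbits, with $p(\mathcal O)=0$, $q(\mathcal O)=|\mathcal O|$. *)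

From HB Require Import structures.
From mathcomp Require Import all_boot all_order all_algebra.
From mathcomp Require Import finmap.
From Stdlib Require Import ClassicalEpsilon.

Set Implicit Arguments.
Unset Strict Implicit.
Unset Printing Implicit Defensive.

Local Open Scope fset_scope.

(* Signs {+1,-1} are encoded as booleans: true = +1, false = -1, and
   negation -e is negb e. *)

Section Gentle.
Variables (V A : finType) (s t : A -> V) (R : rel A).
(* R a b  means the length-2 path (a, b) (with s a = t b) belongs to R. *)

Definition is_path (w : seq A) : bool :=
  (w != [::]) && sorted (fun a b => s a == t b) w.

Definition und_adj : rel V :=
  fun x y => [exists a, ((s a == x) && (t a == y)) || ((s a == y) && (t a == x))].

Definition gentle : Prop :=
  (forall x y : V, connect und_adj x y) /\
  (forall a b, R a b -> s a = t b) /\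
  (forall x : V, #|[set a | s a == x]| <= 2 /\ #|[set a | t a == x]| <= 2)%N /\
  (forall al : A, #|[set b | (s b == t al) && ~~ R b al]| <= 1 /\
                  #|[set c | (t c == s al) && ~~ R al c]| <= 1)%N /\
  (forall al : A, #|[set b | R b al]| <= 1 /\ #|[set c | R al c]| <= 1)%N /\
  (exists n : nat, (0 < n)%N /\
     forall w : seq A, is_path w -> size w = n ->
       ~~ sorted (fun a b => ~~ R a b) w).

Variables (sigma tau : A -> bool).

Definition sign_functions : Prop :=
  (forall a b, a != b -> s a = s b -> sigma a != sigma b) /\
  (forall a b, a != b -> t a = t b -> tau a != tau b) /\
  (forall a b, s a = t b -> (R a b <-> sigma a = tau b)).

(* Paths, permitted or antipaths:
   inl (inl (x,e))  = trivial permitted path 1_{x,e}   (sigma = e, tau = -e)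
   inl (inr (x,e))  = trivial antipath 1'_{x,e}        (sigma = tau = e)
   inr (a, w)       = nontrivial path with arrow list a :: w. *)
Definition gpath : Type := ((V * bool) + (V * bool) + (A * seq A))%type.

Definition arrows (g : gpath) : seq A :=
  match g with inr (a, w) => a :: w | _ => [::] end.

Definition glen (g : gpath) : nat := size (arrows g).

Definition gsrc (g : gpath) : V :=
  match g with
  | inl (inl (x, _)) | inl (inr (x, _)) => x
  | inr (a, w) => s (last a w)
  end.

Definition gtgt (g : gpath) : V :=
  match g with
  | inl (inl (x, _)) | inl (inr (x, _)) => x
  | inr (a, _) => t a
  end.

Definition gsigma (g : gpath) : bool :=
  match g with
  | inl (inl (_, e)) | inl (inr (_, e)) => e
  | inr (a, w) => sigma (last a w)
  end.

Definition gtau (g : gpath) : bool :=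
  match g with
  | inl (inl (_, e)) => ~~ e
  | inl (inr (_, e)) => e
  | inr (a, _) => tau a
  end.

Definition permitted (g : gpath) : bool :=
  match g with
  | inl (inl _) => true
  | inl (inr _) => false
  | inr (a, w) => is_path (a :: w) && sorted (fun x y => ~~ R x y) (a :: w)
  end.

Definition antipath (g : gpath) : bool :=
  match g with
  | inl (inl _) => false
  | inl (inr _) => true
  | inr (a, w) => is_path (a :: w) && sorted R (a :: w)
  end.

Definition maxPerm (g : gpath) : bool :=
  [&& permitted g,
      ~~ [exists al, (s al == gtgt g) && (sigma al == ~~ gtau g)] &
      ~~ [exists be, (t be == gsrc g) && (tau be == ~~ gsigma g)]].

(* the set N of maximal antipaths *)
Definition maxAnti (g : gpath) : bool :=
  [&& antipath g,
      ~~ [exists al, (s al == gtgt g) && (sigma al == gtau g)] &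
      ~~ [exists be, (t be == gsrc g) && (tau be == gsigma g)]].

Definition phi (g : gpath) : gpath :=
  epsilon (inhabits g)
    (fun g' => maxAnti g' /\ gtgt g' = gtgt g /\ gtau g' = ~~ gtau g).

Definition psi (g : gpath) : gpath :=
  epsilon (inhabits g)
    (fun g' => maxPerm g' /\ gsrc g' = gsrc g /\ gsigma g' = ~~ gsigma g).

Definition Phi (g : gpath) : gpath := phi (psi g).

(* Orbits of Phi on N, given a finite set sN enumerating N *)
Definition Phi_orbit (sN : {fset gpath}) (g : gpath) : {fset gpath} :=
  [fset iter k Phi g | k in iota 0 #|` sN|].

Definition N_orbits (sN : {fset gpath}) : {fset {fset gpath}} :=
  [fset Phi_orbit sN g | g in sN].

Definition pO (O : {fset gpath}) : nat := #|` O|.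
Definition qO (O : {fset gpath}) : nat := (\sum_(g <- O) glen g)%N.

(* C: arrows al such that (al) is not a subpath of a maximal antipath *)
Definition pbool (P : Prop) : bool :=
  if excluded_middle_informative P then true else false.

Definition Cset : {set A} :=
  [set al | ~~ pbool (exists g, maxAnti g /\ al \in arrows g)].

Definition Psi (al : A) : A :=
  epsilon (inhabits al)
    (fun be => be \in Cset /\ t be = s al /\ tau be = sigma al).

Definition Psi_orbit (al : A) : {set A} :=
  [set iter (nat_of_ord k) Psi al | k : 'I_#|Cset|].

Definition C_orbits : {set {set A}} := [set Psi_orbit al | al in Cset].

Definition pC (O : {set A}) : nat := 0.
Definition qC (O : {set A}) : nat := #|O|.

End Gentle.

(* Put out a := (s a, sigma a) and inn a := (t a, tau a) in V * bool.  The sign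
   axioms make out and inn injective and say that a length-2 path (a, b) lies in R
   exactly when out a = inn b.  So nontrivial antipaths are the paths of the
   partial bijection "out a = inn b" on arrows, and a maximal antipath is
   determined by either end: its head (t, tau) or its foot (s, sigma).  The heads
   of maximal antipaths are exactly the pairs not of the form out a, and there are
   2|V| - |A| of those; as Phi permutes the finite set N, its orbits partition N,
   which gives the sum of p.  Every arrow lies on at most one maximal antipath, and
   those lying on none form C, which Psi permutes; hence the sum of q counts every
   arrow exactly once. *)

From Pilot Require Import Defs.
From HB Require Import structures.
From mathcomp Require Import all_boot all_order all_algebra.
From mathcomp Require Import finmap zify.
From Stdlib Require Import Classical ClassicalEpsilon.

Set Implicit Arguments.
Unset Strict Implicit.
Unset Printing Implicit Defensive.

Lemma path_suffix (T : eqType) (e : rel T) a w x : path e a w -> x \in a :: w ->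
  exists v, [/\ path e x v, last x v = last a w & size v <= size w].
Proof.
move=> pw; rewrite inE; have [-> _|_ /= xw] := eqVneq x a; first by exists w.
case/splitPr: xw pw => u v; rewrite cat_path last_cat /= => /and3P[_ _ pv].
by exists v; split=> //; rewrite size_cat /=; lia.
Qed.

Section FunctionalPaths.
Variables (T : eqType) (e : rel T).
Hypothesis e_fun : forall x y y', e x y -> e x y' -> y = y'.

Lemma maximal_path_eq a w1 w2 : path e a w1 -> path e a w2 ->
  (forall y, ~~ e (last a w1) y) -> (forall y, ~~ e (last a w2) y) -> w1 = w2.
Proof.
elim: w1 a w2 => [|b w1 IHw] a [|c w2] //=.
- by move=> _ /andP[eac _] /(_ c); rewrite eac.
- by move=> /andP[eab _] _ _ /(_ b); rewrite eab.
- move=> /andP[eab pb] /andP[eac pc] maxb maxc.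
  by have bc := e_fun eab eac; subst c; rewrite (IHw b w2).
Qed.

Lemma maximal_path_uniq a w : path e a w -> (forall y, ~~ e (last a w) y) ->
  uniq (a :: w).
Proof.
elim: w a => [|b w IHw] a // /andP[eab pb] maxw.
rewrite cons_uniq IHw // andbT; apply/negP => /(path_suffix pb)[v [pv last_v size_v]].
have maxv y : ~~ e (last a v) y by rewrite last_v; apply: maxw.
have p_bw : path e a (b :: w) by rewrite /= eab.
by have /(congr1 size) /= := maximal_path_eq p_bw pv maxw maxv; lia.
Qed.

End FunctionalPaths.

Lemma path_pred (T : eqType) (e : rel T) a w y : path e a w -> y \in w ->
  exists2 x, x \in a :: w & e x y.
Proof.
move=> pw yw; case/splitPr: yw pw => u v; rewrite cat_path /= => /and3P[_ exy _].
by exists (last a u); rewrite // -cat_cons mem_cat mem_last.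
Qed.

Lemma rev_belast_last (T : Type) (a : T) w : last (last a w) (rev (belast a w)) = a.
Proof. by case: w => //= b w; rewrite rev_cons last_rcons. Qed.

Section PartialBijectionPaths.
Variables (T : eqType) (e : rel T).
Hypothesis e_fun : forall x y y', e x y -> e x y' -> y = y'.
Hypothesis e_cofun : forall x x' y, e x y -> e x' y -> x = x'.

Let e_rev_fun : forall x y y', e y x -> e y' x -> y = y'.
Proof. by move=> x y y'; apply: e_cofun. Qed.

Lemma maximal_path_rev_eq a1 w1 a2 w2 : path e a1 w1 -> path e a2 w2 ->
  (forall y, ~~ e y a1) -> (forall y, ~~ e y a2) -> last a1 w1 = last a2 w2 ->
  a1 :: w1 = a2 :: w2.
Proof.
move=> p1 p2 src1 src2 L; rewrite [_ :: w1]lastI [_ :: w2]lastI L; congr rcons.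
apply: (can_inj revK); apply: (maximal_path_eq e_rev_fun (a := last a2 w2)).
- by rewrite -{1}L rev_path.
- by rewrite rev_path.
- by move=> y; rewrite -{1}L rev_belast_last.
- by move=> y; rewrite rev_belast_last.
Qed.

Lemma source_path_uniq a w : path e a w -> (forall y, ~~ e y a) -> uniq (a :: w).
Proof.
move=> pw src; rewrite -rev_uniq lastI rev_rcons.
apply: (maximal_path_uniq e_rev_fun); first by rewrite rev_path.
by move=> y; rewrite rev_belast_last.
Qed.

Lemma maximal_paths_meet a1 w1 a2 w2 x : path e a1 w1 -> path e a2 w2 ->
  (forall y, ~~ e y a1) -> (forall y, ~~ e y a2) ->
  (forall y, ~~ e (last a1 w1) y) -> (forall y, ~~ e (last a2 w2) y) ->
  x \in a1 :: w1 -> x \in a2 :: w2 -> a1 :: w1 = a2 :: w2.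
Proof.
move=> p1 p2 src1 src2 snk1 snk2 /(path_suffix p1)[v1 [pv1 L1 _]].
move=> /(path_suffix p2)[v2 [pv2 L2 _]].
apply: maximal_path_rev_eq => //; rewrite -L1 -L2.
by congr last; apply: (maximal_path_eq e_fun pv1 pv2) => y; rewrite ?L1 ?L2.
Qed.

End PartialBijectionPaths.

Lemma exists_maximal_path (T : finType) (e : rel T)
    (e_cofun : forall x x' y, e x y -> e x' y -> x = x') a :
  (forall y, ~~ e y a) -> exists2 w, path e a w & forall y, ~~ e (last a w) y.
Proof.
move=> src; apply: NNPP => no_max.
have long k : exists2 w, path e a w & size w = k.
  elim: k => [|k [w pw <-]]; first by exists [::].
  have [y ey] : exists y, e (last a w) y.
    apply: NNPP => no_y; apply: no_max; exists w => // y.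
    by apply/negP => ey; apply: no_y; exists y.
  by exists (rcons w y); rewrite ?rcons_path ?pw ?ey ?size_rcons.
have [w pw sw] := long #|T|.
have := max_card (mem (a :: w)).
by rewrite (card_uniqP (source_path_uniq e_cofun pw src)) /= sw ltnn.
Qed.

Lemma exists_maximal_path_to (T : finType) (e : rel T)
    (e_fun : forall x y y', e x y -> e x y' -> y = y') b :
  (forall y, ~~ e b y) ->
  exists a w, [/\ path e a w, last a w = b & forall y, ~~ e y a].
Proof.
move=> snk; have e_rev_cofun x x' y : e y x -> e y x' -> x = x' by apply: e_fun.
have [w pw snkw] := exists_maximal_path (e := fun x y => e y x) e_rev_cofun snk.
exists (last b w), (rev (belast b w)); split => //; last exact: rev_belast_last.
by rewrite rev_path.
Qed.

Lemma iter_mul_fixed (T : Type) (f : T -> T) p m x :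
  iter p f x = x -> iter (m * p) f x = x.
Proof. by move=> per_p; elim: m => // m IHm; rewrite mulSn iterD IHm. Qed.

Lemma big_seq_sub (T : eqType) (S L : seq T) (F : T -> nat) :
  uniq S -> uniq L -> {subset L <= S} ->
  \sum_(x <- S | x \in L) F x = \sum_(x <- L) F x.
Proof.
move=> S_uniq L_uniq LS; rewrite -big_filter; apply/perm_big/uniq_perm => //.
  exact: filter_uniq.
by move=> x; rewrite mem_filter andb_idr //; apply: LS.
Qed.

Section IterOrbits.
Variables (T : eqType) (f : T -> T) (S : seq T).
Hypothesis f_in : {in S, forall x, f x \in S}.
Hypothesis f_inj : {in S &, injective f}.

Definition iter_orbit x := [seq iter k f x | k <- iota 0 (size S)].

Lemma iter_in k x : x \in S -> iter k f x \in S.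
Proof. by move=> xS; elim: k => //= k IHk; apply: f_in. Qed.

Lemma iter_period x : x \in S -> exists2 p, 0 < p <= size S & iter p f x = x.
Proof.
move=> xS; have : ~~ uniq (mkseq (fun k => iter k f x) (size S).+1).
  apply/negP => /uniq_leq_size le_S.
  have /le_S : {subset mkseq (fun k => iter k f x) (size S).+1 <= S}.
    by move=> _ /mapP[k _ ->]; apply: iter_in.
  by rewrite size_mkseq ltnn.
case/(uniqPn x) => i [j [lt_ij lt_jS]]; rewrite size_mkseq in lt_jS.
rewrite !nth_mkseq ?(ltn_trans lt_ij) // => eq_ij.
have cancel_iter k d : iter (d + k) f x = iter k f x -> iter d f x = x.
  elim: k => [|k IHk]; first by rewrite addn0.
  by rewrite addnS => /f_inj eq_k; apply: IHk; apply: eq_k; apply: iter_in.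
exists (j - i); last by apply: (cancel_iter i); rewrite subnK ?eq_ij // ltnW.
by rewrite subn_gt0 lt_ij (leq_trans (leq_subr _ _)).
Qed.

Lemma iter_orbitP x y :
  x \in S -> reflect (exists k, y = iter k f x) (y \in iter_orbit x).
Proof.
move=> xS; apply: (iffP mapP) => [[k _ ->]|[k ->]]; first by exists k.
have [p /andP[p_gt0 p_le] per_p] := iter_period xS.
have iter_mulp m : iter (m * p) f x = x by apply: iter_mul_fixed.
exists (k %% p); last by rewrite {1}(divn_eq k p) addnC iterD iter_mulp.
by rewrite mem_iota /= (leq_trans (ltn_pmod _ p_gt0)).
Qed.

Lemma iter_orbit_id x : x \in S -> x \in iter_orbit x.
Proof. by move=> xS; apply/iter_orbitP => //; exists 0. Qed.

Lemma iter_orbit_sub x : x \in S -> {subset iter_orbit x <= S}.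
Proof. by move=> xS y /iter_orbitP[] // k ->; apply: iter_in. Qed.

Lemma iter_orbit_eq x y : x \in S -> y \in iter_orbit x -> iter_orbit x =i iter_orbit y.
Proof.
move=> xS xy; have yS := iter_orbit_sub xS xy.
case/iter_orbitP: xy => // j ->{y} in yS *.
have [p /andP[p_gt0 _] per_p] := iter_period xS.
have iter_mulp m : iter (m * p) f x = x by apply: iter_mul_fixed.
move=> z; apply/iter_orbitP/iter_orbitP => // -[k ->].
  exists (k + p.-1 * j); rewrite iterD -[iter _ f (iter j f x)]iterD.
  by rewrite -mulSnr prednK // mulnC iter_mulp.
by exists (k + j); rewrite iterD.
Qed.

Variables (X : eqType) (orbs : seq X) (orbit_at : T -> X) (mem_orbit : X -> T -> bool).
Hypothesis orbs_uniq : uniq orbs.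
Hypothesis orbsE : orbs =i map orbit_at S.
Hypothesis mem_orbit_at :
  {in S, forall x y, mem_orbit (orbit_at x) y = (y \in iter_orbit x)}.
Hypothesis mem_orbit_inj : forall O1 O2, mem_orbit O1 =1 mem_orbit O2 -> O1 = O2.

Lemma count_orbits x : x \in S -> count (mem_orbit^~ x) orbs = 1.
Proof.
move=> xS; transitivity (count_mem (orbit_at x) orbs).
  apply: eq_in_count => O; rewrite orbsE => /mapP[y yS ->] /=.
  apply/idP/eqP => [|->]; last by rewrite mem_orbit_at // iter_orbit_id.
  rewrite mem_orbit_at // => xy; apply: mem_orbit_inj => z.
  by rewrite !mem_orbit_at // (iter_orbit_eq yS xy).
by rewrite count_uniq_mem // orbsE map_f.
Qed.

Lemma big_orbits (F : T -> nat) :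
  \sum_(O <- orbs) \sum_(x <- S | mem_orbit O x) F x = \sum_(x <- S) F x.
Proof.
under eq_bigr do rewrite big_mkcond /=.
rewrite exchange_big /=; apply: eq_big_seq => x xS.
by rewrite -big_mkcond big_const_seq count_orbits //= addn0.
Qed.

End IterOrbits.

Section Antipaths.
Variables (V A : finType) (s t : A -> V) (R : rel A) (sigma tau : A -> bool).
Hypothesis sign : sign_functions s t R sigma tau.

Definition out a : V * bool := (s a, sigma a).
Definition inn a : V * bool := (t a, tau a).
Definition link a b := out a == inn b.
Definition head (g : gpath V A) := (gtgt t g, gtau tau g).
Definition foot (g : gpath V A) := (gsrc s g, gsigma sigma g).

Local Notation maxA := (maxAnti s t R sigma tau).

Lemma out_inj : injective out.
Proof.
case: sign => sigma_sep _ a b [eq_s eq_sigma]; apply/eqP/contraT => neq_ab.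
by have := sigma_sep a b neq_ab eq_s; rewrite eq_sigma eqxx.
Qed.

Lemma inn_inj : injective inn.
Proof.
case: sign => _ [tau_sep _] a b [eq_t eq_tau]; apply/eqP/contraT => neq_ab.
by have := tau_sep a b neq_ab eq_t; rewrite eq_tau eqxx.
Qed.

Lemma link_fun a b b' : link a b -> link a b' -> b = b'.
Proof. by move=> /eqP ab /eqP ab'; apply: inn_inj; rewrite -ab -ab'. Qed.

Lemma link_cofun a a' b : link a b -> link a' b -> a = a'.
Proof. by move=> /eqP ab /eqP a'b; apply: out_inj; rewrite ab a'b. Qed.

Lemma antipathE a w : antipath s t R (inr (a, w)) = path link a w.
Proof.
rewrite /antipath /is_path /= -path_relI; apply: eq_path => b c /=.
rewrite /link /out /inn xpair_eqE; have [eq_st|] //= := eqVneq (s b) (t c).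
by case: sign => _ [_ /(_ b c eq_st)[R_sigma sigma_R]]; apply/idP/eqP.
Qed.

Lemma maxAntiP g : maxA g <->
  [/\ antipath s t R g, forall a, out a != head g & forall b, inn b != foot g].
Proof.
by split=> [/and3P[? /existsPn ? /existsPn ?] | [? ? ?]];
  last apply/and3P; split=> //; apply/existsPn.
Qed.

Lemma maxAnti_inrP a w : maxA (inr (a, w)) <->
  [/\ path link a w, forall b, ~~ link b a & forall b, ~~ link (last a w) b].
Proof.
rewrite maxAntiP antipathE /link.
by split=> -[pw src snk]; split=> // b; rewrite eq_sym; apply: snk.
Qed.

Lemma maxAnti_inlP x e : maxA (inl (inr (x, e))) <->
  (forall a, out a != (x, e)) /\ (forall b, inn b != (x, e)).
Proof. by rewrite maxAntiP; split=> [[]|[]]. Qed.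

Lemma exists_maxAnti_head n : (forall a, out a != n) -> exists2 g, maxA g & head g = n.
Proof.
move=> no_out; case: (pickP (fun b => inn b == n)) => [b /eqP inn_b | no_inn].
  have src y : ~~ link y b by rewrite /link inn_b no_out.
  have [w pw snk] := exists_maximal_path link_cofun src.
  by exists (inr (b, w)); first exact/maxAnti_inrP.
case: n no_out no_inn => x e no_out no_inn.
by exists (inl (inr (x, e))) => //; apply/maxAnti_inlP; split=> // b; rewrite no_inn.
Qed.

Lemma exists_maxAnti_foot n : (forall b, inn b != n) -> exists2 g, maxA g & foot g = n.
Proof.
move=> no_inn; case: (pickP (fun a => out a == n)) => [a /eqP out_a | no_out].
  have snk y : ~~ link a y by rewrite /link out_a eq_sym no_inn.
  have [a' [w [pw last_w src]]] := exists_maximal_path_to link_fun snk.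
  exists (inr (a', w)); first by apply/maxAnti_inrP; rewrite last_w.
  by rewrite -out_a -last_w.
case: n no_inn no_out => x e no_inn no_out.
by exists (inl (inr (x, e))) => //; apply/maxAnti_inlP; split=> // a; rewrite no_out.
Qed.

Lemma maxAnti_head_inj : {in maxA &, injective head}.
Proof.
move=> [[[x1 e1]|[x1 e1]]|[a1 w1]] [[[x2 e2]|[x2 e2]]|[a2 w2]] //.
- by move=> _ _ [-> ->].
- by move=> /maxAnti_inlP[_ /(_ a2)/eqP no_inn] _ /esym.
- by move=> _ /maxAnti_inlP[_ /(_ a1)/eqP no_inn].
move=> /maxAnti_inrP[p1 _ snk1] /maxAnti_inrP[p2 _ snk2] /inn_inj eq_a; subst a2.
by rewrite (maximal_path_eq link_fun p1 p2 snk1 snk2).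
Qed.

Lemma maxAnti_foot_inj : {in maxA &, injective foot}.
Proof.
move=> [[[x1 e1]|[x1 e1]]|[a1 w1]] [[[x2 e2]|[x2 e2]]|[a2 w2]] //.
- by move=> _ _ [-> ->].
- by move=> /maxAnti_inlP[/(_ (last a2 w2))/eqP no_out _] _ /esym.
- by move=> _ /maxAnti_inlP[/(_ (last a1 w1))/eqP no_out _].
move=> /maxAnti_inrP[p1 src1 _] /maxAnti_inrP[p2 src2 _] /out_inj eq_last.
by case: (maximal_path_rev_eq link_cofun p1 p2 src1 src2 eq_last) => -> ->.
Qed.

Lemma maxAnti_arrows_uniq g : maxA g -> uniq (arrows g).
Proof.
case: g => [[[x e]|[x e]]|[a w]] // /maxAnti_inrP[pw _ snk].
exact: (maximal_path_uniq link_fun pw snk).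
Qed.

Lemma maxAnti_arrows_meet g1 g2 a : maxA g1 -> maxA g2 ->
  a \in arrows g1 -> a \in arrows g2 -> g1 = g2.
Proof.
case: g1 => [[[x e]|[x e]]|[a1 w1]] //; case: g2 => [[[x e]|[x e]]|[a2 w2]] //.
move=> /maxAnti_inrP[p1 src1 snk1] /maxAnti_inrP[p2 src2 snk2] a1w1 a2w2.
by case: (maximal_paths_meet link_fun link_cofun p1 p2 src1 src2 snk1 snk2 a1w1 a2w2)
  => -> ->.
Qed.

Lemma maxAnti_arrows_link g a b : maxA g -> link a b ->
  b \in arrows g -> a \in arrows g.
Proof.
case: g => [[[x e]|[x e]]|[a1 w]] // /maxAnti_inrP[pw src _] ab.
rewrite inE; have [eq_b | _ /= bw] := eqVneq b a1.
  by move: ab; rewrite eq_b (negbTE (src a)).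
by have [a' a'w /(link_cofun ab) ->] := path_pred pw bw.
Qed.

Lemma exists_maxAnti_sink a : (forall b, ~~ link a b) ->
  exists2 g, maxA g & a \in arrows g.
Proof.
move=> snk; have [|g Mg foot_g] := exists_maxAnti_foot (n := out a).
  by move=> b; rewrite eq_sym snk.
exists g => //; move: g Mg foot_g => [[[x e]|[x e]]|[a' w]] //.
  by case/maxAnti_inlP => /(_ a)/eqP no_out _ /esym/no_out.
by move=> _ /out_inj <-; apply: mem_last.
Qed.

End Antipaths.

Section Duality.
Variables (V A : finType) (s t : A -> V) (R : rel A) (sigma tau : A -> bool).

(* Permitted paths for (R, sigma) are the antipaths for (~~ R, ~~ sigma), the
   trivial path 1_{x,e} becoming 1'_{x,-e}. *)
Definition dual (g : gpath V A) : gpath V A :=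
  match g with
  | inl (inl (x, e)) => inl (inr (x, ~~ e))
  | inl (inr (x, e)) => inl (inl (x, ~~ e))
  | inr p => inr p
  end.

Lemma dualK : involutive dual.
Proof. by case=> [[[x e]|[x e]]|p] //=; rewrite negbK. Qed.

Lemma head_dual g : head t tau (dual g) = head t tau g.
Proof. by case: g => [[[x e]|[x e]]|p] //=; rewrite /head /= negbK. Qed.

Lemma gsrc_dual g : gsrc s (dual g) = gsrc s g.
Proof. by case: g => [[[x e]|[x e]]|p]. Qed.

Lemma gsigma_dual g : gsigma sigma (dual g) = ~~ gsigma (fun a => ~~ sigma a) g.
Proof. by case: g => [[[x e]|[x e]]|[a w]] //=; rewrite negbK. Qed.

Lemma sign_functions_dual : sign_functions s t R sigma tau ->
  sign_functions s t (fun a b => ~~ R a b) (fun a => ~~ sigma a) tau.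
Proof.
case=> sigma_sep [tau_sep R_sign]; split=> [a b ab eq_s|].
  by rewrite (inj_eq negb_inj) sigma_sep.
split=> // a b /R_sign R_eq.
have -> : R a b = (sigma a == tau b) by apply/idP/eqP => /R_eq.
by case: (sigma a) (tau b) => [] [].
Qed.

Lemma maxPerm_dual g : maxPerm s t R sigma tau g =
  maxAnti s t (fun a b => ~~ R a b) (fun a => ~~ sigma a) tau (dual g).
Proof.
case: g => [[[x e]|[x e]]|[a w]] //; rewrite /maxPerm /maxAnti /=.
  under [in RHS]eq_existsb => a do rewrite (inj_eq negb_inj).
  by rewrite [~~ ~~ e]negbK.
by under [in RHS]eq_existsb => b do rewrite /= eqb_negLR.
Qed.

End Duality.

Lemma maxPerm_head_inj (V A : finType) (s t : A -> V) R (sigma tau : A -> bool) :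
  sign_functions s t R sigma tau ->
  {in maxPerm s t R sigma tau &, injective (head t tau)}.
Proof.
move=> sign m1 m2; rewrite -2!topredE /= !maxPerm_dual => M1 M2 eq_head.
rewrite -[m1]dualK -[m2]dualK; congr dual.
by apply: (maxAnti_head_inj (sign_functions_dual sign)); rewrite // !head_dual.
Qed.

Lemma maxPerm_out (V A : finType) (s t : A -> V) R (sigma tau : A -> bool) m :
  maxPerm s t R sigma tau m -> forall a, out s sigma a != (gtgt t m, ~~ gtau tau m).
Proof. by case/and3P => _ /existsPn. Qed.

Section Counting.
Variables (V A : finType) (s t : A -> V) (R : rel A) (sigma tau : A -> bool).
Hypothesis sign : sign_functions s t R sigma tau.

Local Notation maxA := (maxAnti s t R sigma tau).
Local Notation maxP := (maxPerm s t R sigma tau).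
Local Notation out := (out s sigma).
Local Notation head := (head t tau).
Local Notation Cs := (Cset s t R sigma tau).
Local Notation psi := (psi s t R sigma tau).
Local Notation phi := (phi s t R sigma tau).

Lemma psi_spec g : maxA g ->
  [/\ maxP (psi g), gsrc s (psi g) = gsrc s g &
      gsigma sigma (psi g) = ~~ gsigma sigma g].
Proof.
case/maxAntiP => _ _ no_inn.
have [m' Mm' [src_m' sigma_m']] :=
  exists_maxAnti_foot (sign_functions_dual sign) no_inn.
have : exists m, maxP m /\ gsrc s m = gsrc s g /\ gsigma sigma m = ~~ gsigma sigma g.
  exists (dual m'); rewrite maxPerm_dual dualK gsrc_dual gsigma_dual.
  by rewrite src_m' sigma_m'.
by case/(epsilon_spec (inhabits g)) => ? [? ?]; split.
Qed.

Lemma phi_spec m : maxP m ->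
  [/\ maxA (phi m), gtgt t (phi m) = gtgt t m & gtau tau (phi m) = ~~ gtau tau m].
Proof.
move=> Mm; have [g Mg [tgt_g tau_g]] := exists_maxAnti_head sign (maxPerm_out Mm).
have : exists g, maxA g /\ gtgt t g = gtgt t m /\ gtau tau g = ~~ gtau tau m.
  by exists g.
by case/(epsilon_spec (inhabits m)) => ? [? ?]; split.
Qed.

Definition free_heads : {set V * bool} := ~: [set out a | a : A].

Lemma card_free_heads : #|free_heads| + #|A| = 2 * #|V|.
Proof.
rewrite -(card_imset _ (out_inj sign)) addnC cardsC card_prod card_bool.
by rewrite mulnC.
Qed.

Definition maxAnti_of_head n : gpath V A :=
  epsilon (inhabits (inl (inr n))) (fun g => maxA g /\ head g = n).

Lemma maxAnti_of_headP n :
  n \in free_heads -> maxA (maxAnti_of_head n) /\ head (maxAnti_of_head n) = n.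
Proof.
move=> n_free; apply: (epsilon_spec _ (fun g => maxA g /\ head g = n)).
have [|g Mg head_g] := exists_maxAnti_head sign (n := n); last by exists g.
by move=> a; apply: contraTneq n_free => <-; rewrite in_setC imset_f.
Qed.

Definition maxAnti_fset : {fset gpath V A} :=
  [fset maxAnti_of_head n | n in enum free_heads]%fset.

Lemma maxAnti_fsetE g : (g \in maxAnti_fset) = maxA g.
Proof.
apply/imfsetP/idP => [[n] | Mg]; first by rewrite mem_enum => /maxAnti_of_headP[? _] ->.
have head_free : head g \in free_heads.
  rewrite in_setC; apply/imsetP => -[a _ head_a].
  by case/maxAntiP: Mg => _ /(_ a); rewrite head_a eqxx.
exists (head g); first by rewrite mem_enum.
have [Mg' head_g] := maxAnti_of_headP head_free.
by apply: (maxAnti_head_inj sign) => //; rewrite head_g.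
Qed.

Lemma card_maxAnti_fset : (#|` maxAnti_fset|)%fset = #|free_heads|.
Proof.
rewrite card_in_imfset /= ?undup_id ?enum_uniq -?cardE // => n1 n2.
rewrite !mem_enum => /maxAnti_of_headP[_ head1] /maxAnti_of_headP[_ head2] eq_n.
by rewrite -head1 -head2 eq_n.
Qed.

Local Notation sN := maxAnti_fset.
Local Notation Phi := (Phi s t R sigma tau).

Lemma Phi_in : {in sN, forall g, Phi g \in sN}.
Proof.
move=> g; rewrite !maxAnti_fsetE => Mg.
by have [Mpsi _ _] := psi_spec Mg; have [] := phi_spec Mpsi.
Qed.

Lemma Phi_inj : {in sN &, injective Phi}.
Proof.
move=> g1 g2; rewrite !maxAnti_fsetE => M1 M2 eq_Phi.
have [P1 src1 sigma1] := psi_spec M1; have [P2 src2 sigma2] := psi_spec M2.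
have [_ tgt1 tau1] := phi_spec P1; have [_ tgt2 tau2] := phi_spec P2.
have eq_psi : psi g1 = psi g2.
  move/(congr1 head): eq_Phi; rewrite /head /Defs.Phi tgt1 tgt2 tau1 tau2.
  case=> eq_tgt /negb_inj eq_tau; apply: (maxPerm_head_inj sign) => //.
  by rewrite /head eq_tgt eq_tau.
apply: (maxAnti_foot_inj sign) => //; rewrite /foot -src1 -src2 eq_psi.
by congr pair; apply: negb_inj; rewrite -sigma1 -sigma2 eq_psi.
Qed.

Lemma big_N_orbits (F : gpath V A -> nat) :
  \sum_(O <- N_orbits s t R sigma tau sN) \sum_(g <- O) F g = \sum_(g <- sN) F g.
Proof.
have Phi_orbitE x y :
    (y \in Phi_orbit s t R sigma tau sN x) = (y \in iter_orbit Phi sN x).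
  by apply/imfsetP/mapP => -[k k_lt ->]; exists k.
rewrite -(big_orbits Phi_in Phi_inj (X := {fset gpath V A})
  (orbs := N_orbits s t R sigma tau sN) (orbit_at := Phi_orbit s t R sigma tau sN)
  (mem_orbit := fun O g => g \in O)) ?fset_uniq //.
- apply: eq_big_seq => O /imfsetP[x xsN ->]; rewrite big_seq_sub ?fset_uniq //.
  by move=> y; rewrite Phi_orbitE => /(iter_orbit_sub Phi_in Phi_inj xsN).
- by move=> O; apply/imfsetP/mapP.
- by move=> O1 O2 eq_O; apply/fsetP.
Qed.

Local Notation Psi := (Psi s t R sigma tau).
Local Notation link := (link s t sigma tau).

Lemma CsetP a : reflect (~ exists2 g, maxA g & a \in arrows g) (a \in Cs).
Proof.
rewrite inE /pbool; case: excluded_middle_informative => [in_maxA|no_maxA]; constructor.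
  by case: in_maxA => g [Mg ag] []; exists g.
by case=> g Mg ag; apply: no_maxA; exists g.
Qed.

Lemma Psi_spec a : a \in Cs -> Psi a \in Cs /\ link a (Psi a).
Proof.
move=> aC; have [b bC ab] : exists2 b, b \in Cs & link a b.
  case: (pickP (link a)) => [b ab | no_succ].
    exists b => //; apply/CsetP => -[g Mg bg]; move/CsetP: aC; apply.
    by exists g; last exact: maxAnti_arrows_link Mg ab bg.
  have [g Mg ag] := exists_maxAnti_sink sign (a := a) (fun b => negbT (no_succ b)).
  by move/CsetP: aC; case; exists g.
have : Psi a \in Cs /\ t (Psi a) = s a /\ tau (Psi a) = sigma a.
  apply: (epsilon_spec _ (fun b => b \in Cs /\ t b = s a /\ tau b = sigma a)).
  by exists b; case/eqP: ab => -> ->.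
by case=> Psi_C [t_Psi tau_Psi]; split=> //; apply/eqP; rewrite /inn t_Psi tau_Psi.
Qed.

Lemma Psi_in : {in enum Cs, forall a, Psi a \in enum Cs}.
Proof. by move=> a; rewrite !mem_enum => /Psi_spec[]. Qed.

Lemma Psi_inj : {in enum Cs &, injective Psi}.
Proof.
move=> a1 a2; rewrite !mem_enum => /Psi_spec[_ /eqP l1] /Psi_spec[_ /eqP l2] eq_Psi.
by apply: (out_inj sign); rewrite l1 l2 eq_Psi.
Qed.

Lemma sum_qC_orbits : \sum_(O in C_orbits s t R sigma tau) qC O = #|Cs|.
Proof.
have Psi_orbitE a b :
    (b \in Psi_orbit s t R sigma tau a) = (b \in iter_orbit Psi (enum Cs) a).
  apply/imsetP/mapP => [[k _ ->]|[k k_lt ->]].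
    by exists (nat_of_ord k); rewrite // mem_iota -cardE ltn_ord.
  by rewrite mem_iota -cardE in k_lt; exists (Ordinal k_lt).
rewrite -big_enum /= cardE -sum1_size.
rewrite -(big_orbits Psi_in Psi_inj (X := {set A})
  (orbs := enum (C_orbits s t R sigma tau)) (orbit_at := Psi_orbit s t R sigma tau)
  (mem_orbit := fun O a => a \in O)) ?enum_uniq //.
- apply: eq_big_seq => O; rewrite mem_enum => /imsetP[a aC ->].
  rewrite big_enum_cond /= sum1_card; apply: eq_card => b.
  have aCs : a \in enum Cs by rewrite mem_enum.
  rewrite [in RHS]unfold_in /= andb_idl // Psi_orbitE.
  by move/(iter_orbit_sub Psi_in Psi_inj aCs); rewrite mem_enum.
- move=> O; rewrite mem_enum.
  apply/idP/idP => [/imsetP[a aC ->] | /mapP[a aC ->]].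
    by apply: map_f; rewrite mem_enum.
  by apply: imset_f; rewrite -mem_enum.
- by move=> O1 O2 eq_O; apply/setP => a; apply: eq_O.
Qed.

Lemma count_arrows_maxAnti a : count (fun g => a \in arrows g) sN = (a \notin Cs).
Proof.
case: (CsetP a) => [aC | /NNPP[g Mg ag]].
  rewrite (eq_in_count (a2 := pred0)) ?count_pred0 // => g.
  by rewrite maxAnti_fsetE => Mg /=; apply/negP => ag; apply: aC; exists g.
rewrite (eq_in_count (a2 := pred1 g)) ?count_uniq_mem ?fset_uniq ?maxAnti_fsetE ?Mg //.
move=> g'; rewrite maxAnti_fsetE => Mg' /=.
by apply/idP/eqP => [ag' | ->] //; apply: (maxAnti_arrows_meet sign Mg' Mg ag' ag).
Qed.

Lemma sum_glen_maxAnti : \sum_(g <- sN) glen g + #|Cs| = #|A|.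
Proof.
have glenE g : g \in sN -> glen g = \sum_a (if a \in arrows g then 1 else 0).
  rewrite -big_mkcond sum1_card maxAnti_fsetE => /(maxAnti_arrows_uniq sign).
  by move/card_uniqP.
rewrite (eq_big_seq _ glenE) exchange_big -sum1_card.
rewrite [\sum_(a in Cs) 1]big_mkcond -big_split /=.
rewrite -[#|A|]sum1_card; apply: eq_bigr => a _.
by rewrite -big_mkcond sum1_count count_arrows_maxAnti; case: (a \in Cs).
Qed.

End Counting.

Unset Implicit Arguments.
Local Open Scope fset_scope.

Theorem lemma3p2 (V A : finType) (s t : A -> V) (R : rel A)
    (sigma tau : A -> bool) :
  gentle s t R ->
  sign_functions s t R sigma tau ->
  exists sN : {fset gpath V A},
    (forall g : gpath V A, (g \in sN) = maxAnti s t R sigma tau g) /\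
    (((\sum_(O <- N_orbits s t R sigma tau sN) pO O
       + \sum_(O in C_orbits s t R sigma tau) pC O)%N%:Z
      = 2 * (#|V|)%:Z - (#|A|)%:Z)%R) /\
    ((\sum_(O <- N_orbits s t R sigma tau sN) qO O
       + \sum_(O in C_orbits s t R sigma tau) qC O)%N = #|A|).
Proof.
move=> _ sign; exists (maxAnti_fset s t R sigma tau).
split; first exact: maxAnti_fsetE.
split; last by rewrite (big_N_orbits sign) (sum_qC_orbits sign) (sum_glen_maxAnti sign).
have -> : \sum_(O <- N_orbits s t R sigma tau (maxAnti_fset s t R sigma tau)) pO O
    = #|free_heads s sigma|.
  rewrite -(card_maxAnti_fset sign) -sum1_size -(big_N_orbits sign (fun=> 1)).
  by apply: eq_bigr => O _; rewrite sum1_size.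
have := card_free_heads sign; rewrite big1 // addn0; lia.
Qed.
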